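(* The variety $\mathbf N$ is generated by the semirings $S_c(a_1\cdots a_k)$, $k\geq 1$; that is, $\mathbf N=\mathsf V(\{S_c(a_1\cdots a_k)\mid k\ge1\})$.
   Context: $S_7$ is the ai-semiring on $\{\infty,a,1\}$ with $x+x=x$, $x+y=\infty$ for $x\neq y$, and commutative multiplication with $\infty$ a zero, $a\cdot a=\infty$, $a\cdot 1=a$, $1\cdot1=1$. $\mathbf N$ is the subvariety of $\mathsf V(S_7)$ defined by the identity $x^2y\approx x^2$. For $k\ge1$, $S_c(a_1\cdots a_k)$ is the flat semiring whose elements are $\infty$ together with all nonempty subwords of $a_1\cdots a_k$ in the free commutative semigroup; the product of two such words is their product if it is again such a subword and $\infty$ otherwise; $\infty$ is a multiplicative zero; $x+x=x$ and $x+y=\infty$ for $x\neq y$. *)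

From mathcomp Require Import all_boot.
Set Implicit Arguments. Unset Strict Implicit. Unset Printing Implicit Defensive.

Inductive term : Type :=
  | Var of nat
  | Add of term & term
  | Mul of term & term.

Fixpoint eval (T : Type) (add mul : T -> T -> T) (f : nat -> T) (t : term) : T :=
  match t with
  | Var n => f n
  | Add s u => add (eval add mul f s) (eval add mul f u)
  | Mul s u => mul (eval add mul f s) (eval add mul f u)
  end.

Definition holds (T : Type) (add mul : T -> T -> T) (u v : term) : Prop :=
  forall f : nat -> T, eval add mul f u = eval add mul f v.

Record is_ai_semiring (T : Type) (add mul : T -> T -> T) : Prop := {
  addA : forall x y z, add x (add y z) = add (add x y) z;
  addC : forall x y, add x y = add y x;
  addxx : forall x, add x x = x;
  mulA : forall x y z, mul x (mul y z) = mul (mul x y) z;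
  mulDl : forall x y z, mul (add x y) z = add (mul x z) (mul y z);
  mulDr : forall x y z, mul x (add y z) = add (mul x y) (mul x z)
}.

Inductive S7 : Type := Inf7 | A7 | One7.

Definition S7_add (x y : S7) : S7 :=
  match x, y with
  | Inf7, Inf7 => Inf7
  | A7, A7 => A7
  | One7, One7 => One7
  | _, _ => Inf7
  end.

Definition S7_mul (x y : S7) : S7 :=
  match x, y with
  | Inf7, _ => Inf7
  | _, Inf7 => Inf7
  | A7, A7 => Inf7
  | A7, One7 => A7
  | One7, A7 => A7
  | One7, One7 => One7
  end.

(** The flat semiring S_c(a_1 ... a_k): a nonempty subword of a_1...a_k in the
    free commutative semigroup is identified with the nonempty set of indices
    of its letters; [None] is ∞. *)
Definition Sc (k : nat) : eqType := option {A : {set 'I_k} | A != set0}.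

Definition Sc_add (k : nat) (x y : Sc k) : Sc k :=
  if x == y then x else None.

Definition Sc_mul (k : nat) (x y : Sc k) : Sc k :=
  match x, y with
  | Some A, Some B =>
      if [disjoint val A & val B] then insub (val A :|: val B) else None
  | _, _ => None
  end.

Definition x2y : term := Mul (Mul (Var 0) (Var 0)) (Var 1).
Definition x2 : term := Mul (Var 0) (Var 0).

Definition in_N (T : Type) (add mul : T -> T -> T) : Prop :=
  is_ai_semiring add mul /\
  (forall u v, holds S7_add S7_mul u v -> holds add mul u v) /\
  holds add mul x2y x2.

(** Membership in V({S_c(a_1...a_k) | k >= 1}) = Mod(Id(K)). *)
Definition in_V_Sc (T : Type) (add mul : T -> T -> T) : Prop :=
  is_ai_semiring add mul /\
  (forall u v, (forall k, 0 < k -> holds (@Sc_add k) (@Sc_mul k) u v) ->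
               holds add mul u v).

From mathcomp Require Import all_boot.
From Stdlib Require Import Classical.
Set Implicit Arguments. Unset Strict Implicit. Unset Printing Implicit Defensive.

(* Each S_c(a_1...a_k) maps onto S_7 in k ways, the i-th sending a word to a
   if it contains a_i and to 1 otherwise; these maps respect every non-∞
   value, which gives the S_7 identities in S_c.  Conversely, finitely many
   S_7 assignments that keep a term u away from ∞ glue coordinatewise into one
   S_c assignment keeping u away from ∞, so S_c sees every S_7 evaluation of u
   that avoids ∞, provided each variable of u can be sent to a.  Hence an
   identity u ≈ v of all S_c is an identity of S_7 unless u is ∞ under every
   S_c assignment; in that case some variable y of u is never a while u is
   finite, S_7 satisfies u ≈ u + u y^2, and in N this collapses u to y^2.
   Since x^2 y ≈ x^2 makes all squares equal in N, u ≈ v holds there. *)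

Local Notation eval7 := (eval S7_add S7_mul).
Local Notation evalSc k := (eval (@Sc_add k) (@Sc_mul k)).

Fixpoint vars (t : term) : seq nat :=
  match t with
  | Var n => [:: n]
  | Add s u | Mul s u => vars s ++ vars u
  end.

Lemma vars_neq_nil t : vars t != [::].
Proof. by elim: t => [n|s IHs u _|s IHs u _] //=; case: (vars s) IHs. Qed.

Lemma eq_in_eval (T : Type) (add mul : T -> T -> T) (f1 f2 : nat -> T) t :
  {in vars t, f1 =1 f2} -> eval add mul f1 t = eval add mul f2 t.
Proof.
elim: t => [n|s IHs u IHu|s IHs u IHu] /= eqf; first by apply: eqf; rewrite inE.
all: by rewrite IHs ?IHu // => x xt; apply: eqf; rewrite mem_cat xt ?orbT.
Qed.

Lemma eval7_Inf f t x : x \in vars t -> f x = Inf7 -> eval7 f t = Inf7.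
Proof.
elim: t => [n|s IHs u IHu|s IHs u IHu] /=; first by rewrite inE => /eqP <-.
all: rewrite mem_cat => /orP[xt|xt] fx; [rewrite IHs | rewrite IHu] => //.
all: by case: (eval7 f _).
Qed.

Lemma evalSc_None k (g : nat -> Sc k) t x :
  x \in vars t -> g x = None -> evalSc k g t = None.
Proof.
elim: t => [n|s IHs u IHu|s IHs u IHu] /=; first by rewrite inE => /eqP <-.
all: rewrite mem_cat /Sc_add => /orP[xt|xt] gx; [rewrite IHs | rewrite IHu] => //.
all: by case: (evalSc k g _) => //; case: eqP.
Qed.

Lemma S7_add_neq_Inf x y : S7_add x y <> Inf7 -> x = y /\ x <> Inf7.
Proof. by case: x; case: y. Qed.

Lemma S7_mul_neq_Inf x y : S7_mul x y <> Inf7 ->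
  [/\ x <> Inf7, y <> Inf7 & ~ (x = A7 /\ y = A7)].
Proof. by case: x; case: y => //= _; split => // -[]. Qed.

Lemma Sc_add_Some k (x y : Sc k) V : Sc_add x y = Some V -> x = Some V /\ y = Some V.
Proof. by rewrite /Sc_add; case: (x =P y) => [<- ->|]. Qed.

Lemma Sc_mul_Some k (x y : Sc k) V : Sc_mul x y = Some V ->
  exists A B, [/\ x = Some A, y = Some B, [disjoint val A & val B] &
                  val V = val A :|: val B].
Proof.
case: x => [A|] //; case: y => [B|] //=; case: ifP => // AB.
by case: insubP => [W _ eW [<-]|//]; exists A, B.
Qed.

Lemma Sc_mulxx k (x : Sc k) : Sc_mul x x = None.
Proof.
case: x => [A|] //=; case: ifP => // AA.
by case/set0Pn: (valP A) => i Ai; move: (disjointFr AA Ai); rewrite Ai.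
Qed.

Lemma Sc_nonempty k (U : {A : {set 'I_k} | A != set0}) : 0 < k.
Proof. by case/set0Pn: (valP U) => -[i ltik] _; apply: leq_ltn_trans ltik. Qed.

Definition Sc_proj k (i : 'I_k) (x : Sc k) : S7 :=
  if x is Some A then (if i \in val A then A7 else One7) else Inf7.

Lemma Sc_proj_Some k (i : 'I_k) A : Sc_proj i (Some A) <> Inf7.
Proof. by rewrite /=; case: ifP. Qed.

Lemma Sc_proj_inj k (A B : {A : {set 'I_k} | A != set0}) :
  (forall i, Sc_proj i (Some A) = Sc_proj i (Some B)) -> A = B.
Proof.
move=> eqAB; apply: val_inj; apply/setP => i; move: (eqAB i) => /=.
by case: (i \in val A); case: (i \in val B).
Qed.

Lemma eval_Sc_proj k (g : nat -> Sc k) t V i :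
  evalSc k g t = Some V -> eval7 (Sc_proj i \o g) t = Sc_proj i (Some V).
Proof.
elim: t V => [n|s IHs u IHu|s IHs u IHu] V /=; first by move=> ->.
  by case/Sc_add_Some => /IHs -> /IHu ->; rewrite /=; case: ifP.
case/Sc_mul_Some => [A [B [/IHs -> /IHu -> AB eV]]] /=; rewrite eV in_setU.
case Ai: (i \in val A); case Bi: (i \in val B) => //.
by rewrite (disjointFr AB Ai) in Bi.
Qed.

Lemma evalSc_Some_of_proj k (g : nat -> Sc k) t : 0 < k ->
  (forall i, eval7 (Sc_proj i \o g) t <> Inf7) -> exists V, evalSc k g t = Some V.
Proof.
move=> k_gt0; elim: t => [n|s IHs u IHu|s IHs u IHu] /= fin.
- by move: (fin (Ordinal k_gt0)); case: (g n) => [A _|//]; exists A.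
- have [A sA] : exists A, evalSc k g s = Some A.
    by apply: IHs => i; case: (S7_add_neq_Inf (fin i)).
  have [B uB] : exists B, evalSc k g u = Some B.
    by apply: IHu => i; case: (S7_add_neq_Inf (fin i)) => ->.
  suff eAB : A = B by exists B; rewrite sA uB eAB /Sc_add eqxx.
  apply: Sc_proj_inj => i; case: (S7_add_neq_Inf (fin i)).
  by rewrite (eval_Sc_proj i sA) (eval_Sc_proj i uB).
- have [A sA] : exists A, evalSc k g s = Some A.
    by apply: IHs => i; case: (S7_mul_neq_Inf (fin i)).
  have [B uB] : exists B, evalSc k g u = Some B.
    by apply: IHu => i; case: (S7_mul_neq_Inf (fin i)).
  have AB : [disjoint val A & val B].
    apply/pred0P => i /=; apply/negP => /andP[Ai Bi].
    case: (S7_mul_neq_Inf (fin i)) => _ _; apply.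
    by rewrite (eval_Sc_proj i sA) (eval_Sc_proj i uB) /= Ai Bi.
  rewrite sA uB /= AB; case: insubP => [W _ _|]; first by exists W.
  by rewrite setU_eq0 (negPf (valP A)).
Qed.

Lemma S7_identity_Sc k u v : 0 < k ->
  holds S7_add S7_mul u v -> holds (@Sc_add k) (@Sc_mul k) u v.
Proof.
move=> k_gt0 uv g.
have transfer a b : holds S7_add S7_mul a b -> forall U,
    evalSc k g a = Some U -> evalSc k g b = Some U.
  move=> ab U aU; have projb i : eval7 (Sc_proj i \o g) b = Sc_proj i (Some U).
    by rewrite -ab (eval_Sc_proj i aU).
  have [|V bV] := @evalSc_Some_of_proj k g b k_gt0.
    by move=> i; rewrite projb; apply: Sc_proj_Some.
  by rewrite bV; congr Some; apply: Sc_proj_inj => i; rewrite -(eval_Sc_proj i bV).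
case uU: (evalSc k g u) => [U|]; first by rewrite (transfer u v uv U uU).
case vV: (evalSc k g v) => [V|] //.
by rewrite (transfer v u (fun f => esym (uv f)) V vV) in uU.
Qed.

Definition S7_isA (x : S7) : bool := if x is A7 then true else false.
Definition S7_finite (x : S7) : bool := if x is Inf7 then false else true.

Definition Sc_glue k (F : 'I_k -> nat -> S7) (x : nat) : Sc k :=
  if [forall i, S7_finite (F i x)] then insub [set i | S7_isA (F i x)] else None.

Lemma Sc_proj_glue k (F : 'I_k -> nat -> S7) x A i :
  Sc_glue F x = Some A -> Sc_proj i (Some A) = F i x.
Proof.
rewrite /Sc_glue; case: ifP => // /forallP finF.
case: insubP => [W _ eW [<-]|//] /=; rewrite eW inE.
by move: (finF i); case: (F i x).
Qed.

Lemma Sc_glue_Some k (F : 'I_k -> nat -> S7) x i :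
  (forall j, F j x <> Inf7) -> F i x = A7 -> exists A, Sc_glue F x = Some A.
Proof.
move=> finF Fix; rewrite /Sc_glue.
have -> : [forall j, S7_finite (F j x)].
  by apply/forallP => j; move: (finF j); case: (F j x).
case: insubP => [W _ _|]; first by exists W.
by case/negP; apply/set0Pn; exists i; rewrite inE Fix.
Qed.

Section Glue.
Variables (k : nat) (F : 'I_k -> nat -> S7).

Lemma eval_Sc_glue t V i :
  evalSc k (Sc_glue F) t = Some V -> eval7 (F i) t = Sc_proj i (Some V).
Proof.
move=> tV; rewrite -(eval_Sc_proj i tV); apply: eq_in_eval => x xt /=.
case gx: (Sc_glue F x) => [A|]; first by rewrite (Sc_proj_glue i gx).
by move: (evalSc_None xt gx); rewrite tV.
Qed.

Lemma evalSc_glue_Some u :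
  (forall i, eval7 (F i) u <> Inf7) ->
  (forall y, y \in vars u -> exists i, F i y = A7) ->
  exists U, evalSc k (Sc_glue F) u = Some U.
Proof.
move=> finF coverF.
have glued x : x \in vars u -> exists A, Sc_glue F x = Some A.
  move=> xu; have [i Fix] := coverF x xu.
  by apply: (Sc_glue_Some _ Fix) => j /(eval7_Inf xu); apply: finF.
have [y yu] : exists y, y \in vars u.
  by case: (vars u) (vars_neq_nil u) => // y s _; exists y; rewrite mem_head.
have [[i ltik] _] := coverF y yu.
apply: (evalSc_Some_of_proj (leq_ltn_trans (leq0n i) ltik)) => j.
rewrite (@eq_in_eval _ _ _ _ (F j)); first exact: finF.
by move=> x /glued [A gx]; rewrite -(Sc_proj_glue j gx) -gx.
Qed.

End Glue.

Lemma finite_witnesses (X : eqType) (A : Type) (P : A -> Prop) (Q : X -> A -> Prop)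
    (s : seq X) :
  (forall y, y \in s -> exists2 a, P a & Q y a) ->
  exists n (w : n.-tuple A),
    (forall i, P (tnth w i)) /\ forall y, y \in s -> exists i, Q y (tnth w i).
Proof.
elim: s => [|y s IHs] wit.
  by exists 0, [tuple]; split => [[]|].
have [a Pa Qya] := wit y (mem_head y s).
have [|n [w [Pw Qw]]] := IHs; first by move=> z zs; apply: wit; rewrite inE zs orbT.
exists n.+1, [tuple of a :: w]; split.
  by move=> i; case: (unliftP ord0 i) => [j ->|->]; rewrite ?tnthS ?tnth0.
move=> z; rewrite inE => /orP[/eqP->|/Qw[i Qzi]]; first by exists ord0; rewrite tnth0.
by exists (lift ord0 i); rewrite tnthS.
Qed.

Definition Sc_nonzero (u : term) : Prop :=
  exists k (g : nat -> Sc k) U, evalSc k g u = Some U.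

Definition S7_covered (u : term) : Prop :=
  forall y, y \in vars u -> exists2 f, eval7 f u <> Inf7 & f y = A7.

Lemma Sc_nonzero_covered u : Sc_nonzero u -> S7_covered u.
Proof.
move=> [k [g [U uU]]] y yu; case gy: (g y) => [A|].
  have [i Ai] := set0Pn _ (valP A).
  exists (Sc_proj i \o g); last by rewrite /= gy /= Ai.
  by rewrite (eval_Sc_proj i uU); apply: Sc_proj_Some.
by move: (evalSc_None yu gy); rewrite uU.
Qed.

Lemma covered_Sc_nonzero u : S7_covered u -> Sc_nonzero u.
Proof.
move=> /finite_witnesses [n [w [finw coverw]]].
have [U uU] := evalSc_glue_Some finw coverw.
by exists n, (Sc_glue (tnth w)), U.
Qed.

Lemma S7_eq_of_Sc u v f : Sc_nonzero u ->
  (forall k, 0 < k -> holds (@Sc_add k) (@Sc_mul k) u v) ->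
  eval7 f u <> Inf7 -> eval7 f u = eval7 f v.
Proof.
move=> /Sc_nonzero_covered /finite_witnesses [n [w [finw coverw]]] uv fu.
pose F := tnth [tuple of f :: w].
have finF i : eval7 (F i) u <> Inf7.
  by rewrite /F; case: (unliftP ord0 i) => [j ->|->]; rewrite ?tnthS ?tnth0.
have coverF y : y \in vars u -> exists i, F i y = A7.
  by move=> /coverw[i wi]; exists (lift ord0 i); rewrite /F tnthS.
have [U uU] := evalSc_glue_Some finF coverF.
have vU : evalSc n.+1 (Sc_glue F) v = Some U by rewrite -uv.
by rewrite -[f]/(F ord0) (eval_Sc_glue ord0 uU) (eval_Sc_glue ord0 vU).
Qed.

Lemma Sc_identity_S7 u v : Sc_nonzero u ->
  (forall k, 0 < k -> holds (@Sc_add k) (@Sc_mul k) u v) ->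
  holds S7_add S7_mul u v.
Proof.
move=> uNZ uv f.
have vNZ : Sc_nonzero v.
  by case: uNZ => k [g [U uU]]; exists k, g, U; rewrite -uv ?(Sc_nonempty U).
case fu: (eval7 f u); try by rewrite -fu; apply: S7_eq_of_Sc; rewrite ?fu.
case fv: (eval7 f v) => //; rewrite -fu -fv; symmetry.
all: by apply: S7_eq_of_Sc; rewrite ?fv // => k k_gt0 g; rewrite (uv k k_gt0).
Qed.

Lemma not_covered_var u : ~ S7_covered u ->
  exists2 y, y \in vars u & forall f, eval7 f u <> Inf7 -> f y <> A7.
Proof.
move=> not_cov; apply: NNPP => no_var; apply: not_cov => y yu.
apply: NNPP => no_f; apply: no_var; exists y => // f fu fy.
by apply: no_f; exists f.
Qed.

Section NIdentities.
Variables (T : Type) (add mul : T -> T -> T).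
Hypothesis S7_ids : forall u v, holds S7_add S7_mul u v -> holds add mul u v.
Hypothesis x2y_x2 : holds add mul x2y x2.

Let assign2 (s t : T) : nat -> T := fun n => if n == 0 then s else t.

Lemma N_mulC s t : mul s t = mul t s.
Proof.
apply: (@S7_ids (Mul (Var 0) (Var 1)) (Mul (Var 1) (Var 0)) _ (assign2 s t)).
by move=> f /=; case: (f 0); case: (f 1).
Qed.

Lemma N_sq_mul s t : mul (mul s s) t = mul s s.
Proof. exact: (x2y_x2 (assign2 s t)). Qed.

Lemma N_add_sq s t : add t (mul s s) = mul s s.
Proof.
rewrite -[RHS](N_sq_mul s (mul t t)).
apply: (@S7_ids (Add (Var 1) x2) (Mul x2 (Mul (Var 1) (Var 1))) _ (assign2 s t)).
by move=> f /=; case: (f 0); case: (f 1).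
Qed.

Lemma N_sq_const s s' : mul s s = mul s' s'.
Proof. by rewrite -(N_sq_mul s (mul s' s')) N_mulC N_sq_mul. Qed.

(* In S_7, u ≈ u + u y^2: where u is finite y is 1, and elsewhere both sides
   are ∞. *)
Lemma N_eval_sq u y : y \in vars u -> (forall f, eval7 f u <> Inf7 -> f y <> A7) ->
  forall h, eval add mul h u = mul (h y) (h y).
Proof.
move=> yu yA h.
have uyy : holds S7_add S7_mul (Add u (Mul u (Mul (Var y) (Var y)))) u.
  move=> f /=; case fy: (f y); first by rewrite (eval7_Inf yu fy).
    by case fu: (eval7 f u) => //; case: (yA f); rewrite ?fu.
  by case: (eval7 f u).
by rewrite -(S7_ids uyy h) /= N_mulC N_sq_mul N_add_sq.
Qed.

End NIdentities.

Theorem lemma4p5 (T : Type) (add mul : T -> T -> T) :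
  in_N add mul <-> in_V_Sc add mul.
Proof.
split=> [[ai [S7_ids x2y_x2]]|[ai Sc_ids]]; split=> //.
- move=> u v uv; have [uNZ|uZ] := classic (Sc_nonzero u).
    by apply: S7_ids; apply: Sc_identity_S7.
  have vZ : ~ Sc_nonzero v.
    case=> k [g [U vU]]; apply: uZ; exists k, g, U.
    by rewrite uv ?(Sc_nonempty U).
  have [y yu yA] := not_covered_var (fun c => uZ (covered_Sc_nonzero c)).
  have [y' yv yA'] := not_covered_var (fun c => vZ (covered_Sc_nonzero c)).
  move=> h; rewrite (N_eval_sq S7_ids x2y_x2 yu yA) (N_eval_sq S7_ids x2y_x2 yv yA').
  exact: (N_sq_const S7_ids x2y_x2).
- split=> [u v uv|]; apply: Sc_ids => k k_gt0.
    exact: S7_identity_Sc.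
  by move=> g /=; rewrite Sc_mulxx.
Qed.
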